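(* Let $d\ge 1$ and let $H=(V,E)$ be a $d$-regular graph, let $E'\subseteq E$, and let $v(e)\in\mathbb Z_2^d$ be assigned to each $e\in E'$. Suppose that for every vertex $u$, the vectors $v(e)$ over all edges $e\in E'$ incident with $u$ are linearly independent. Then one can assign a vector $v(e)\in\mathbb Z_2^d$ to every edge $e\in E\setminus E'$ so that for every vertex $u$, the $d$ vectors assigned to the $d$ edges incident with $u$ form a basis of $\mathbb Z_2^d$.
   Context: All graphs are finite and simple. *)

From mathcomp Require Import all_boot all_order all_algebra.
Set Implicit Arguments. Unset Strict Implicit. Unset Printing Implicit Defensive.

Definition simple_graph (V : finType) (adj : rel V) : Prop :=
  symmetric adj /\ irreflexive adj.

Definition edges (V : finType) (adj : rel V) : {set {set V}} :=
  [set [set x; y] | x in V, y in V & adj x y].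

Definition regular (V : finType) (adj : rel V) (d : nat) : Prop :=
  forall x : V, #|[set y | adj x y]| = d.

Definition incident (V : finType) (F : {set {set V}}) (u : V) : {set {set V}} :=
  [set f in F | u \in f].

From mathcomp Require Import all_boot all_order all_algebra.
Import GRing.Theory.
Set Implicit Arguments. Unset Strict Implicit. Unset Printing Implicit Defensive.

(* Assign vectors to the edges of E \ E' one at a time, keeping
   the invariant that at every vertex the vectors on the edges assigned so far
   are linearly independent.  When a new edge e = {x, y} is added, fewer than
   d edges at x (resp. y) carry a vector, so their span U_x (resp. U_y) is a
   proper subspace of F_2^d.  A vector space is never the union of two proper
   subspaces, so some a lies outside U_x and U_y; putting a on e preserves the
   invariant.  Once every edge carries a vector, each vertex sees d
   independent vectors in a d-dimensional space, i.e. a basis. *)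

Section LinearAlgebra.
Variables (K : fieldType) (vT : vectType K).

Lemma exists_notin_proper (U : {vspace vT}) :
  (\dim U < dim vT)%N -> exists a, a \notin U.
Proof.
move=> dimU; have /subvPn [a _ aU] : ~~ (fullv <= U)%VS.
  by apply: contraL dimU => /dimvS; rewrite dimvf -leqNgt.
by exists a.
Qed.

Lemma avoid_two_subspaces (U1 U2 : {vspace vT}) :
  (\dim U1 < dim vT)%N -> (\dim U2 < dim vT)%N ->
  exists a, (a \notin U1) && (a \notin U2).
Proof.
move=> dimU1 dimU2; have [sU12 | /subvPn [b bU1 bU2]] := boolP (U1 <= U2)%VS.
  have [a aU2] := exists_notin_proper dimU2; exists a; rewrite aU2 andbT.
  by apply: contra aU2 => /(subvP sU12).
have [c cU1] := exists_notin_proper dimU1.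
have [cU2 | cU2] := boolP (c \in U2); last by exists c; rewrite cU1.
(* b + c avoids U1 because b does not, and U2 because c lies in it *)
exists (b + c)%R; apply/andP; split.
  by apply: contra cU1 => bcU1; rewrite -(addKr b c) memvD ?memvN.
by apply: contra bU2 => bcU2; rewrite -(addrK c b) memvB.
Qed.

Lemma dim_span_free_lt (X : seq vT) :
  free X -> (size X < dim vT)%N -> (\dim <<X>> < dim vT)%N.
Proof. by move/eqnP->. Qed.

Lemma free_full_basis (X : seq vT) :
  free X -> size X = dim vT -> basis_of fullv X.
Proof. by move=> freeX sizeX; rewrite basisEfree freeX subvf dimvf sizeX /=. Qed.

End LinearAlgebra.

Lemma perm_enum_setU1 (T : finType) (a : T) (A : {set T}) :
  a \notin A -> perm_eq (enum (a |: A)) (a :: enum A).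
Proof.
move=> aA; apply: uniq_perm; rewrite /= ?enum_uniq ?mem_enum ?aA //.
by move=> x; rewrite in_cons !mem_enum in_setU1.
Qed.

Section IncidentEdges.
Variables (V : finType) (adj : rel V).

Lemma edgesP e : e \in edges adj -> exists x y, adj x y /\ e = [set x; y].
Proof. by case/imset2P => x y _; rewrite inE => xy ->; exists x, y. Qed.

Lemma incident_edges (u : V) : symmetric adj ->
  incident (edges adj) u = [set [set u; y] | y in [set y | adj u y]].
Proof.
move=> adj_sym; apply/setP => f; rewrite inE; apply/andP/imsetP.
  case=> /edgesP [x [y [xy ->]]]; rewrite !inE => /orP [] /eqP ->.
    by exists y; rewrite ?inE.
  by exists x; rewrite ?inE 1?adj_sym // setUC.
case=> y; rewrite inE => uy ->; split; last by rewrite !inE eqxx.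
by apply/imset2P; exists u y; rewrite ?inE.
Qed.

Lemma card_incident_edges d (u : V) :
  simple_graph adj -> regular adj d -> #|incident (edges adj) u| = d.
Proof.
move=> [adj_sym adj_irr] reg; rewrite incident_edges // card_in_imset ?reg //.
move=> y1 y2; rewrite !inE => uy1 _ eq12.
have : y1 \in [set u; y2] by rewrite -eq12 !inE eqxx orbT.
by rewrite !inE => /orP [] /eqP // y1u; rewrite -y1u adj_irr in uy1.
Qed.

Lemma incident_setU1 (F : {set {set V}}) e u :
  incident (e |: F) u = if u \in e then e |: incident F u else incident F u.
Proof.
apply/setP => f; case: ifP => ue; rewrite !inE.
  by case: (eqVneq f e) => [-> | _]; rewrite ?ue ?andbT.
by case: (eqVneq f e) => [-> | _]; rewrite ?ue ?andbF.
Qed.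

Lemma card_incident_lt d (F : {set {set V}}) e u :
  simple_graph adj -> regular adj d -> F \subset edges adj ->
  e \in edges adj -> e \notin F -> u \in e -> (#|incident F u| < d)%N.
Proof.
move=> Hg Hreg sFE eE eF ue; rewrite -(card_incident_edges u Hg Hreg).
apply/proper_card/properP; split.
  by apply/subsetP => f; rewrite !inE => /andP [/(subsetP sFE) -> ->].
by exists e; rewrite !inE ?eE ?ue // (negbTE eF).
Qed.

End IncidentEdges.

Section Extension.
Variables (K : fieldType) (vT : vectType K) (d : nat) (V : finType) (adj : rel V).
Hypothesis Hg : simple_graph adj.
Hypothesis Hreg : regular adj d.
Hypothesis dim_vT : dim vT = d.

Definition locally_free (F : {set {set V}}) (w : {set V} -> vT) :=
  forall u, free [seq w f | f <- enum (incident F u)].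

Definition relabel (w : {set V} -> vT) e a : {set V} -> vT :=
  fun f => if f == e then a else w f.

Lemma map_relabel_notin (S : {set {set V}}) w e a : e \notin S ->
  [seq relabel w e a f | f <- enum S] = [seq w f | f <- enum S].
Proof.
move=> eS; apply/eq_in_map => f; rewrite mem_enum /relabel => fS.
by case: eqP => // fe; rewrite -fe fS in eS.
Qed.

Lemma locally_free_add_edge (F : {set {set V}}) (w : {set V} -> vT) e :
  F \subset edges adj -> e \in edges adj -> e \notin F -> locally_free F w ->
  exists a, locally_free (e |: F) (relabel w e a).
Proof.
move=> sFE eE eF freeF.
have proper_span u : u \in e ->
    (\dim <<[seq w f | f <- enum (incident F u)]>> < dim vT)%N.
  move=> ue; apply: dim_span_free_lt; first exact: freeF.
  by rewrite size_map -cardE dim_vT (card_incident_lt Hg Hreg sFE eE eF ue).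
have [x [y [_ defe]]] := edgesP eE.
have [a /andP [aUx aUy]] := avoid_two_subspaces
  (proper_span x ltac:(by rewrite defe !inE eqxx))
  (proper_span y ltac:(by rewrite defe !inE eqxx orbT)).
exists a => u; rewrite incident_setU1.
have eFu : e \notin incident F u by rewrite inE (negbTE eF).
have [ue | _] := boolP (u \in e); last by rewrite map_relabel_notin.
rewrite (perm_free (perm_map _ (perm_enum_setU1 eFu))) /= /relabel eqxx.
rewrite -/(relabel w e a) map_relabel_notin // free_cons freeF andbT.
by move: ue; rewrite defe !inE => /orP [] /eqP ->.
Qed.

Lemma locally_free_extend (F : {set {set V}}) (w : {set V} -> vT) :
  F \subset edges adj -> locally_free F w ->
  exists w', (forall f, f \in F -> w' f = w f) /\ locally_free (edges adj) w'.
Proof.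
move Dn: #|edges adj :\: F| => n; elim: n F w Dn => [|n IHn] F w.
  move/eqP; rewrite cards_eq0 setD_eq0 => sEF sFE freeF.
  by exists w; split; rewrite // (eqP (_ : edges adj == F)) // eqEsubset sEF.
move=> cardD sFE freeF; have [e] : exists e, e \in edges adj :\: F.
  by apply/set0Pn; rewrite -card_gt0 cardD.
rewrite inE => /andP [eF eE].
have [a freeeF] := locally_free_add_edge sFE eE eF freeF.
have seFE : e |: F \subset edges adj by rewrite subUset sub1set eE.
have cardD' : #|edges adj :\: (e |: F)| = n.
  by move: cardD; rewrite (cardsD1 e) inE eF eE setDDl setUC => -[].
have [w' [agree freeE]] := IHn _ _ cardD' seFE freeeF.
exists w'; split => // f fF; rewrite agree ?inE ?fF ?orbT // /relabel.
by case: eqP => // fe; rewrite -fe fF in eF.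
Qed.

End Extension.

Theorem lemma2p2 (d : nat) (V : finType) (adj : rel V)
  (Hd : (1 <= d)%N) (Hg : simple_graph adj) (Hreg : regular adj d)
  (E' : {set {set V}}) (HE' : E' \subset edges adj)
  (v : {set V} -> 'rV['F_2]_d)
  (Hind : forall u : V, free [seq v f | f <- enum (incident E' u)]) :
  exists w : {set V} -> 'rV['F_2]_d,
    (forall f, f \in E' -> w f = v f) /\
    (forall u : V, basis_of fullv [seq w f | f <- enum (incident (edges adj) u)]).
Proof.
have dim_rows : dim 'rV['F_2]_d = d by rewrite dim_matrix mul1r.
have [w [agree freeE]] := locally_free_extend Hg Hreg dim_rows HE' Hind.
exists w; split => // u; apply: free_full_basis; first exact: freeE.
by rewrite size_map -cardE (card_incident_edges u Hg Hreg) dim_rows.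
Qed.
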